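(* Let $M$ be a canonical dtpla and $N$ an earliest total dtop (all of whose states are reachable) such that $[\![M]\!]=[\![N]\!]$. Let $\varphi$ be the aheadness mapping from $N$ to $M$, and let $C\in\mathcal C_\Sigma$. Then (1) $N(C)\Phi=\mathrm{pref}(M,C)$, and (2) for every $v\in\mathbb N_+^*$, $q\in Q_N$ and $p\in P_M$: if $N(C)/v=\langle q,\bot\rangle$ then $\varphi(q,p)=M(C[p])/v$.
   Context: Trees and patterns. $T_\Delta(Z)$ is the set of trees over ranked alphabet $\Delta$ with extra nullary symbols $Z$; $t/v$ is the subtree at node $v\in\mathbb N_+^*$; $\bot$ is a special nullary symbol. For trees $t,t'$, $t\sqsubseteq t'$ means $t'$ is obtained from $t$ by replacing some occurrences of $\bot$ by trees; for a finite nonempty set $T$ of trees, $\sqcap T$ is the greatest lower bound w.r.t. $\sqsubseteq$ (largest common prefix, with $\bot$ at the highest nodes where the trees disagree). A $\Sigma$-context is $C\in T_\Sigma(\{\bot\})$ with exactly one occurrence of $\bot$; $\mathcal C_\Sigma$ is their set; $C[t]$ replaces $\bot$ by $t$. Dtlas. A dtla $M$ from $\Sigma$ to $\Delta$ consists of a finite set $Q_M$ of states, a total deterministic bottom-up tree automaton with finite state set $P_M$ and transitions $\delta(a,p_1,\dots,p_k)$, extended to $\delta_M:T_\Sigma\to P_M$ ($[\![p]\!]_M=\delta_M^{-1}(p)$), axioms $A_M(p)\in T_\Delta(Q_M(\{x_0\}))$, and at most one rule $q(a(x_1\langle p_1\rangle,\dots,x_k\langle p_k\rangle))\to\mathrm{rhs}_M(q,a,p_1,\dots,p_k)\in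 T_\Delta(Q_M(X_k))$ per $q,a,p_1,\dots,p_k$. Semantics: $q_M(a(s_1,\dots,s_k))=\mathrm{rhs}_M(q,a,\delta_M(s_1),\dots,\delta_M(s_k))[q'(x_i)\leftarrow q'_M(s_i)]$, $M(s)=A_M(\delta_M(s))[q(x_0)\leftarrow q_M(s)]$. Total: $[\![M]\!]$ total. A dtop is a dtla with a single look-ahead state $\bot$; write $q_N(s)$, $A_N$, $\mathrm{rhs}_N(q,a)$. A dtpla is a dtla with $|P_M|\ge2$. For $C\in\mathcal C_\Sigma$, $p\in P_M$, $M(C[p])\in T_\Delta(Q_M\times P_M)$ is the output on $C$ with the hole treated as a leaf of look-ahead state $p$ and $q_M(p)=\langle q,p\rangle$; for a dtop $N$, $N(C)=N(C[\bot])\in T_\Delta(Q_N\times\{\bot\})$. A state $q$ is reachable if $\langle q,p\rangle$ labels a node of $M(C[p])$ for some $C,p$. $M$ is la-uniform if there is $\rho_M:Q_M\to P_M$ such that the domain of $[\![q]\!]_M$ is $[\![\rho_M(q)]\!]_M$, every $q(x_0)$ in $A_M(p)$ has $\rho_M(q)=p$, every $q'(x_i)$ in $\mathrm{rhs}_M(q,a,p_1,\dots,p_k)$ has $\rho_M(q')=p_i$, and the rule for $q,a,p_1,\dots,p_k$ exists iff $\delta(a,p_1,\dots,p_k)=\rho_M(q)$. A dtla is earliest if there is no state $q$ and $d\in\Delta$ such that $q(s)$ has root label $d$ for all $s$ in the domain of $[\![q]\!]$. $M$ is canonical if it is total, la-uniform, earliest, all states reachable, and distinct states have distinct translations. $\mathrm{pref}(M,C)=\sqcap\{M(C[p])\mid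 p\in P_M\}$. For $t\in T_\Delta(Q_N\times\{\bot\})$, $t\Phi$ is $t$ with every $\langle q,\bot\rangle$ replaced by $\bot$. Aheadness mapping: the unique $\varphi:Q_N\times P_M\to T_\Delta(Q_M\times P_M)$ with $M(C[p])=N(C)[\langle q,\bot\rangle\leftarrow\varphi(q,p)\mid q\in Q_N]$ for all $C\in\mathcal C_\Sigma$, $p\in P_M$. *)

From Stdlib Require List.
From mathcomp Require Import all_boot.

Set Implicit Arguments.
Unset Strict Implicit.
Unset Printing Implicit Defensive.

Record ranked_alphabet := RankedAlphabet {
  ra_sort :> finType;
  rank : ra_sort -> nat
}.

(* tree D Z : trees with internal symbols from D and extra nullary
   symbols (leaves) from Z, i.e. (before the rank check) T_D(Z). *)
Inductive tree (D Z : Type) : Type :=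
| Sym  : D -> seq (tree D Z) -> tree D Z
| Leaf : Z -> tree D Z.
Arguments Sym {D Z}.
Arguments Leaf {D Z}.

Fixpoint wf (D : ranked_alphabet) (Z : Type) (t : tree D Z) : Prop :=
  match t with
  | Sym d ts => size ts = rank d /\
      (fix go (l : seq (tree D Z)) : Prop :=
         match l with nil => True | u :: l' => wf u /\ go l' end) ts
  | Leaf _ => True
  end.

Fixpoint occurs (D Z : Type) (z : Z) (t : tree D Z) : Prop :=
  match t with
  | Sym _ ts =>
      (fix go (l : seq (tree D Z)) : Prop :=
         match l with nil => False | u :: l' => occurs z u \/ go l' end) ts
  | Leaf z' => z' = z
  end.

Fixpoint subst (D Z Z' : Type) (f : Z -> tree D Z') (t : tree D Z) : tree D Z' :=
  match t with
  | Sym d ts => Sym d (map (subst f) ts)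
  | Leaf z => f z
  end.

Definition tmap (D Z Z' : Type) (f : Z -> Z') : tree D Z -> tree D Z' :=
  subst (fun z => Leaf (f z)).

Fixpoint oseq (A : Type) (l : seq (option A)) : option (seq A) :=
  match l with
  | nil => Some nil
  | o :: l' => match o, oseq l' with
               | Some a, Some l'' => Some (a :: l'')
               | _, _ => None
               end
  end.

Fixpoint osubst (D Z Z' : Type) (f : Z -> option (tree D Z')) (t : tree D Z)
  : option (tree D Z') :=
  match t with
  | Sym d ts => omap (Sym d) (oseq (map (osubst f) ts))
  | Leaf z => f z
  end.

(* t / v : subtree at node v, nodes are sequences of positive integers
   (child numbering starts at 1); None if v is not a node of t *)
Fixpoint subtree (D Z : Type) (t : tree D Z) (v : seq nat) : option (tree D Z) :=
  match v with
  | nil => Some t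
  | i :: v' =>
      match t with
      | Sym _ ts => if i == 0 then None else
          match ohead (drop i.-1 ts) with
          | Some u => subtree u v'
          | None => None
          end
      | Leaf _ => None
      end
  end.

(* Patterns: leaves None play the role of the special symbol ⊥          *)

Inductive ple (D Z : Type) : tree D (option Z) -> tree D (option Z) -> Prop :=
| ple_bot : forall t, ple (Leaf None) t
| ple_leaf : forall z, ple (Leaf (Some z)) (Leaf (Some z))
| ple_sym : forall d ts ts', List.Forall2 (@ple D Z) ts ts' -> ple (Sym d ts) (Sym d ts').

Definition is_glb (D Z : Type) (T : tree D (option Z) -> Prop) (g : tree D (option Z)) : Prop :=
  (forall t, T t -> ple g t) /\
  (forall g', (forall t, T t -> ple g' t) -> ple g' g).

(* A dtla from S to D with state set Q and look-ahead state set P.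
   - trans a [p1;..;pk] = δ(a,p1,..,pk)          (total bottom-up automaton)
   - axiom p = A_M(p), a leaf q stands for q(x0)
   - rhs q a [p1;..;pk] = Some r iff the rule
       q(a(x1<p1>,..,xk<pk>)) -> r  exists; a leaf (q',i) of r stands
     for q'(x_i) (i is 1-based). *)
Record dtla (S D : ranked_alphabet) (Q P : finType) := Dtla {
  trans : S -> seq P -> P;
  axiom : P -> tree D Q;
  rhs : Q -> S -> seq P -> option (tree D (Q * nat))
}.

Definition wf_dtla (S D : ranked_alphabet) (Q P : finType) (M : dtla S D Q P) : Prop :=
  (forall p, wf (axiom M p)) /\
  (forall q a ps r, rhs M q a ps = Some r ->
     [/\ size ps = rank a, wf r & forall q' i, occurs (q', i) r -> 0 < i <= rank a]).

Section Semantics.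
Variables (S D : ranked_alphabet) (Q P : finType) (M : dtla S D Q P).
Variables (Y : Type) (lp : Y -> P).

(* Input trees with extra leaves from Y; a leaf y is treated as a leaf
   of look-ahead state lp y, and q_M(y) = <q, lp y>. *)
Fixpoint la (s : tree S Y) : P :=
  match s with
  | Sym a ss => trans M a (map la ss)
  | Leaf y => lp y
  end.

Fixpoint sem (s : tree S Y) : Q -> option (tree D (Q * P)) :=
  match s with
  | Leaf y => fun q => Some (Leaf (q, lp y))
  | Sym a ss =>
      let fs := map sem ss in
      let ps := map la ss in
      fun q => match rhs M q a ps with
               | None => None
               | Some r => osubst (fun qi => nth (fun _ => None) fs qi.2.-1 qi.1) r
               end
  end.

Definition run (s : tree S Y) : option (tree D (Q * P)) :=
  osubst (fun q => sem s q) (axiom M (la s)).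
End Semantics.

Definition noleaf (P : Type) (v : Empty_set) : P := match v with end.

Definition itree (S : ranked_alphabet) := tree S Empty_set.

Definition delta_M S D Q P (M : dtla S D Q P) (s : itree S) : P := la M (@noleaf P) s.
Definition q_M S D Q P (M : dtla S D Q P) (q : Q) (s : itree S) := sem M (@noleaf P) s q.
Definition M_of S D Q P (M : dtla S D Q P) (s : itree S) := run M (@noleaf P) s.

Definition is_context (S : ranked_alphabet) (C : tree S unit) : Prop :=
  wf C /\ exists2 v, subtree C v = Some (Leaf tt) &
    forall v', subtree C v' = Some (Leaf tt) -> v' = v.

Definition M_ctx S D Q P (M : dtla S D Q P) (C : tree S unit) (p : P) :=
  run M (fun _ : unit => p) C.

Section Props.
Variables (S D : ranked_alphabet) (Q P : finType) (M : dtla S D Q P).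

Definition total_dtla : Prop :=
  forall s : itree S, wf s -> M_of M s <> None.

Definition la_uniform : Prop :=
  exists rho : Q -> P,
  [/\ (forall q (s : itree S), wf s -> (q_M M q s <> None <-> delta_M M s = rho q)),
      (forall p q, occurs q (axiom M p) -> rho q = p),
      (forall q a ps r q' i, rhs M q a ps = Some r -> occurs (q', i) r ->
                             rho q' = nth (rho q') ps i.-1) &
      (forall q a ps, size ps = rank a ->
                      (rhs M q a ps <> None <-> trans M a ps = rho q))].

Definition earliest : Prop :=
  ~ exists (q : Q) (d : D), forall (s : itree S) t, wf s ->
      q_M M q s = Some t -> exists ts, t = Sym d ts.

Definition reachable (q : Q) : Prop :=
  exists (C : tree S unit) (p : P) t,
    is_context C /\ M_ctx M C p = Some t /\ occurs (q, p) t.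

Definition distinct_translations : Prop :=
  forall q q' : Q, q <> q' ->
    exists s : itree S, wf s /\ q_M M q s <> q_M M q' s.

Definition canonical : Prop :=
  [/\ total_dtla, la_uniform, earliest, (forall q, reachable q) & distinct_translations].


Definition is_pref (C : tree S unit) (g : tree D (option (Q * P))) : Prop :=
  is_glb (fun t => exists p tM, M_ctx M C p = Some tM /\ t = tmap Some tM) g.
End Props.

Definition dtpla S D Q (P : finType) (M : dtla S D Q P) : Prop := 2 <= #|P|.

(* [[M]] = [[N]].  On ordinary input trees the outputs contain no
   state leaves (they lie in T_D); to compare outputs of dtlas with
   different state types we erase the (absent) leaf labels to tt. *)
Definition erase (D : Type) (Z : Type) (t : tree D Z) : tree D unit := tmap (fun _ => tt) t.
Definition same_translation S D Q P Q' P' (M : dtla S D Q P) (N : dtla S D Q' P') : Prop :=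
  forall s : itree S, wf s -> omap (@erase D _) (M_of M s) = omap (@erase D _) (M_of N s).

Definition Phi (D : ranked_alphabet) (QN Z : Type) (t : tree D (QN * unit)) : tree D (option Z) :=
  tmap (fun _ => None) t.

Definition aheadness S D QM PM QN (M : dtla S D QM PM) (N : dtla S D QN unit)
  (phi : QN -> PM -> tree D (QM * PM)) : Prop :=
  forall (C : tree S unit) (p : PM), is_context C ->
    M_ctx M C p = omap (subst (fun qb => phi qb.1 p)) (M_ctx N C tt).

From mathcomp Require Import all_boot.
From Stdlib Require Import FunctionalExtensionality Classical.

Set Implicit Arguments.
Unset Strict Implicit.

(* Let N(C) be the output of the dtop N on the context C.
   By aheadness, M(C[p]) = N(C)[<q,⊥> <- φ(q,p)] for every look-ahead
   state p, so part (2) is the fact that substitution at the leaves does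
   not move the nodes of N(C).  For part (1), N(C)Φ is clearly a common
   prefix of all M(C[p]); it is the greatest one as soon as, for every
   leaf <q,⊥> of N(C), the trees φ(q,p) (p ∈ P_M) have ⊥ as greatest
   common prefix.  They cannot all start with the same output symbol d:
   since [[M]] = [[N]] and N is total, every q_N(s) would then start
   with d, contradicting that N is earliest.  They cannot all be the same
   leaf <q',p'> either: every leaf of M(C[p]) carries look-ahead p, and
   M has two distinct look-ahead states. *)

Definition tree_nested_ind (D Z : Type) (P : tree D Z -> Prop)
  (HS : forall d ts, List.Forall P ts -> P (Sym d ts))
  (HL : forall z, P (Leaf z)) : forall t, P t :=
  fix F t := match t with
  | Sym d ts => HS d ts ((fix G l := match l return List.Forall P l with
        | nil => @List.Forall_nil _ P
        | u :: l' => @List.Forall_cons _ P u l' (F u) (G l') end) ts)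
  | Leaf z => HL z end.

Lemma Forall_map_eq (A B : Type) (f g : A -> B) (l : seq A) :
  List.Forall (fun x => f x = g x) l -> map f l = map g l.
Proof. by elim=> //= x l' H _ ->; rewrite H. Qed.

Lemma Forall_ohead_drop (A : Type) (P : A -> Prop) (l : seq A) n u :
  List.Forall P l -> ohead (drop n l) = Some u -> P u.
Proof.
move=> HP; elim: HP n => [|x l' Hx _ IH] [|n] //=; last exact: IH.
by case=> <-.
Qed.

Lemma oseq_map_obind (A B : Type) (h : A -> option B) (l : seq (option A)) :
  oseq (map (fun o => obind h o) l) = obind (fun us => oseq (map h us)) (oseq l).
Proof.
elim: l => //= [[a|] l IH] //=; rewrite IH.
by case: (oseq l) => [l''|] /=; case: (h a).
Qed.

Lemma oseq_ohead (A B : Type) (h : A -> option B) ts us n u0 :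
  oseq (map h ts) = Some us -> ohead (drop n ts) = Some u0 ->
  exists u, h u0 = Some u /\ ohead (drop n us) = Some u.
Proof.
elim: ts us n => //= x ts IH us n.
case E: (h x) => [a|] //; case E2: (oseq _) => [l|] // [<-].
by case: n => [|n] /=; [case=> <-; exists a | exact: IH].
Qed.

Lemma ohead_drop_map (A B : Type) (f : A -> B) n (l : seq A) :
  ohead (drop n (map f l)) = omap f (ohead (drop n l)).
Proof. by rewrite -map_drop; case: (drop n l). Qed.

Section TreeSubstitution.
Variable D : Type.

Lemma osubst_assoc (Z1 Z2 Z3 : Type) (f : Z1 -> option (tree D Z2))
  (g : Z2 -> option (tree D Z3)) t :
  obind (osubst g) (osubst f t) = osubst (fun z => obind (osubst g) (f z)) t.
Proof.
elim/tree_nested_ind: t => //= d ts IH.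
have -> : map (osubst (fun z => obind (osubst g) (f z))) ts
        = map (fun o => obind (osubst g) o) (map (osubst f) ts).
  rewrite -map_comp; apply: Forall_map_eq.
  by elim: IH => //= x l Hx _ H; constructor; rewrite ?Hx.
by rewrite oseq_map_obind; case: (oseq (map (osubst f) ts)).
Qed.

Lemma subtree_subst (Z1 Z2 : Type) (f : Z1 -> tree D Z2) v t u :
  subtree t v = Some u -> subtree (subst f t) v = Some (subst f u).
Proof.
elim: v t => [|i v IH] [d ts|z] //=; try by case=> <-.
case: eqP => // _; rewrite ohead_drop_map.
by case: (ohead _) => //= u0; exact: IH.
Qed.

Lemma subtree_osubst (Z1 Z2 : Type) (f : Z1 -> option (tree D Z2)) v t t' u :
  osubst f t = Some t' -> subtree t v = Some u ->
  exists u', osubst f u = Some u' /\ subtree t' v = Some u'.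
Proof.
elim: v t t' => [|i v IH] t t'; first by move=> H [<-]; exists t'.
case: t => [d ts|z] //=.
case E: (oseq _) => [us|] //= [<-]; case: eqP => // _.
case E2: (ohead _) => [u0|] // Hs.
have [u1 [H1 H2]] := oseq_ohead E E2.
by rewrite /= H2; exact: IH H1 Hs.
Qed.

Lemma occurs_subtree (Z : Type) (z : Z) v (t u : tree D Z) :
  subtree t v = Some u -> occurs z u -> occurs z t.
Proof.
elim: v t => [|i v IH] t; first by case=> ->.
case: t => [d ts|z'] //=; case: eqP => // _.
case E: (ohead _) => [u0|] // Hv Hz; have Hz0 := IH _ Hv Hz.
elim: ts (i.-1) E => [|x ts IHts] [|n] //=; first by case=> ->; left.
by move=> /IHts Ht; right.
Qed.

Lemma leaves_osubst (Z1 Z2 : Type) (P : Z2 -> Prop) (f : Z1 -> option (tree D Z2)) r t :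
  osubst f r = Some t ->
  (forall y u, f y = Some u -> forall z, occurs z u -> P z) ->
  forall z, occurs z t -> P z.
Proof.
move=> + Hf; elim/tree_nested_ind: r t => [d rs IH|y] t /=; last exact: Hf.
case E: (oseq _) => [us|] //= [<-].
elim: rs us IH E => [|r rs IHrs] us /= IH; first by case=> <-.
move/List.Forall_cons_iff: IH => [IHr IHs].
case Er: (osubst f r) => [u|] //; case Es: (oseq _) => [us'|] // [<-] z /= [Hz|Hz].
- exact: IHr Er z Hz.
- exact: IHrs us' IHs Es z Hz.
Qed.

Lemma osubst_empty (Z1 Z2 : Type) (f : Z1 -> option (tree D Z2)) t :
  (Z1 -> False) -> exists t', osubst f t = Some t'.
Proof.
move=> HZ; elim/tree_nested_ind: t => [d ts IH|z] /=; last by case: (HZ z).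
suff [us ->] : exists us, oseq (map (osubst f) ts) = Some us by exists (Sym d us).
elim: IH => /= [|x l [y ->] _ [us ->]]; first by exists nil.
by exists (y :: us).
Qed.

End TreeSubstitution.

Section Prefixes.
Variable D : Type.

Lemma Forall2_map (A B C : Type) (R : B -> C -> Prop) (f : A -> B) (g : A -> C) l :
  List.Forall (fun x => R (f x) (g x)) l -> List.Forall2 R (map f l) (map g l).
Proof. by elim=> //= *; constructor. Qed.

Lemma ple_Sym_inv (Z : Type) d d' (ts ts' : seq (tree D (option Z))) :
  ple (Sym d ts) (Sym d' ts') -> d = d' /\ List.Forall2 (@ple D Z) ts ts'.
Proof. by move=> H; inversion H. Qed.

Lemma ple_Phi (Z1 Z2 : Type) (f : Z1 -> tree D Z2) (t : tree D Z1) :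
  ple (tmap (fun _ => None) t) (tmap Some (subst f t)).
Proof.
elim/tree_nested_ind: t => [d ts IH|z] /=; last by constructor.
constructor; rewrite -map_comp; apply: Forall2_map.
by elim: IH => //= *; constructor.
Qed.

Lemma Forall2_common_bound (I T A B C : Type) (i0 : I) (R : A -> B -> Prop)
  (R' : A -> C -> Prop) (F : I -> T -> B) (G : T -> C) gs ts :
  (forall i, List.Forall2 R gs (map (F i) ts)) ->
  (forall n u, ohead (drop n ts) = Some u ->
     forall g, (forall i, R g (F i u)) -> R' g (G u)) ->
  List.Forall2 R' gs (map G ts).
Proof.
elim: ts gs => [|u ts IH] [|g gs] HF HG /=; first by constructor.
- by have H := HF i0; inversion H.
- by have H := HF i0; inversion H.
have Hcons i : R g (F i u) /\ List.Forall2 R gs (map (F i) ts).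
  by have H := HF i; inversion H.
constructor; first by apply: (HG 0) => // i; case: (Hcons i).
by apply: IH => [i|n]; [case: (Hcons i) | exact: (HG n.+1)].
Qed.

Lemma Phi_greatest (I Z1 Z2 : Type) (i0 : I) (f : I -> Z1 -> tree D Z2)
  (t : tree D Z1) :
  (forall v z, subtree t v = Some (Leaf z) ->
     forall g, (forall i, ple g (tmap Some (f i z))) -> g = Leaf None) ->
  forall g, (forall i, ple g (tmap Some (subst (f i) t))) ->
  ple g (tmap (fun _ => None) t).
Proof.
elim/tree_nested_ind: t => [d ts IH|z] Hleaf g Hg; last first.
  by rewrite (Hleaf nil z erefl g Hg); constructor.
case: g Hg => [d' gs|[z|]] Hg; last by constructor.
  2: by have H := Hg i0; inversion H.
have [<- _] := ple_Sym_inv (Hg i0); constructor.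
apply: (Forall2_common_bound i0 (R := @ple D Z2)
          (F := fun i u => tmap Some (subst (f i) u))).
  by move=> i; have [_ HF] := ple_Sym_inv (Hg i); rewrite /= -map_comp in HF.
move=> n u Hn; apply: (Forall_ohead_drop IH Hn) => v z Hv.
by apply: (Hleaf (n.+1 :: v)); rewrite /= Hn.
Qed.

End Prefixes.

Lemma wf_SymE (D : ranked_alphabet) (Z : Type) d (ts : seq (tree D Z)) :
  wf (Sym d ts) <-> size ts = rank d /\ List.Forall (@wf D Z) ts.
Proof.
rewrite /=; split; case=> Hs H; split=> //; clear Hs; elim: ts H => [|x l IH] /=.
- by constructor.
- by case=> Hx Hl; constructor; auto.
- by [].
- by move=> /List.Forall_cons_iff [Hx /IH].
Qed.

Lemma wf_subst (D : ranked_alphabet) (Z Z' : Type) (h : Z -> tree D Z') (C : tree D Z) :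
  (forall z, wf (h z)) -> wf C -> wf (subst h C).
Proof.
move=> Hh; elim/tree_nested_ind: C => [d ts IH|z] //= /wf_SymE [Hs HF].
apply/wf_SymE; rewrite size_map; split=> //.
by elim: IH HF => //= x l Hx _ IH' /List.Forall_cons_iff [Hwx Hwl]; constructor; auto.
Qed.

Section PluggedContexts.
Variables (S D : ranked_alphabet) (Q P : finType) (M : dtla S D Q P).

Lemma la_subst (Y Y' : Type) (lp' : Y' -> P) (h : Y -> tree S Y') C :
  la M lp' (subst h C) = la M (fun y => la M lp' (h y)) C.
Proof.
elim/tree_nested_ind: C => [a Cs IH|y] //=.
by rewrite -map_comp; congr (trans M a _); exact: Forall_map_eq.
Qed.

Lemma sem_subst (Y' : Type) (lp' : Y' -> P) (s : tree S Y') (C : tree S unit) q :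
  sem M lp' (subst (fun _ : unit => s) C) q =
  obind (osubst (fun qp : Q * P => sem M lp' s qp.1))
        (sem M (fun _ : unit => la M lp' s) C q).
Proof.
elim/tree_nested_ind: C q => [a Cs IH|[]] q //=.
have -> : map (la M lp') (map (subst (fun _ : unit => s)) Cs)
          = map (la M (fun _ : unit => la M lp' s)) Cs.
  rewrite -map_comp; apply: Forall_map_eq.
  by elim: Cs {IH} => //= *; constructor => //; exact: la_subst.
case: (rhs M q a _) => [r|] //=.
rewrite osubst_assoc; congr osubst; apply: functional_extensionality => qi.
move: (qi.2.-1) (qi.1) => n q'.
by elim: IH n => [|x l Hx _ IH'] [|n] //=.
Qed.

Lemma run_subst (Y' : Type) (lp' : Y' -> P) (s : tree S Y') (C : tree S unit) :
  run M lp' (subst (fun _ : unit => s) C) =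
  obind (osubst (fun qp : Q * P => sem M lp' s qp.1))
        (run M (fun _ : unit => la M lp' s) C).
Proof.
rewrite /run osubst_assoc la_subst; congr osubst.
by apply: functional_extensionality => q; exact: sem_subst.
Qed.

Lemma M_of_plug (C : tree S unit) (s : itree S) :
  M_of M (subst (fun _ => s) C) =
  obind (osubst (fun qp : Q * P => q_M M qp.1 s)) (M_ctx M C (delta_M M s)).
Proof. exact: run_subst. Qed.

Lemma M_of_plug_subtree (C : tree S unit) (s : itree S) tC v u t :
  M_ctx M C (delta_M M s) = Some tC -> subtree tC v = Some u ->
  M_of M (subst (fun _ => s) C) = Some t ->
  exists u', osubst (fun qp : Q * P => q_M M qp.1 s) u = Some u' /\
             subtree t v = Some u'.
Proof. by rewrite M_of_plug => -> Hv /= Ht; exact: subtree_osubst Ht Hv. Qed.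

Lemma total_context_run (C : tree S unit) (s : itree S) :
  total_dtla M -> wf C -> wf s -> M_ctx M C (delta_M M s) <> None.
Proof.
move=> totM wC ws; have := totM _ (wf_subst (fun _ => ws) wC).
by rewrite M_of_plug; case: (M_ctx M C _).
Qed.

Lemma sem_leaves (p : P) (C : tree S unit) q t :
  sem M (fun _ : unit => p) C q = Some t -> forall z, occurs z t -> z.2 = p.
Proof.
elim/tree_nested_ind: C q t => [a Cs IH|[]] q t /=; last by move=> [<-] z <-.
case: (rhs M q a _) => [r|] // Hr.
apply: (leaves_osubst Hr) => -[q' i] u /=.
by elim: IH (i.-1) => [|C' Cs' HC' _ IHCs] [|n] //=; [exact: HC' | exact: IHCs].
Qed.

Lemma run_leaves (p : P) (C : tree S unit) t :
  M_ctx M C p = Some t -> forall z, occurs z t -> z.2 = p.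
Proof. by move=> Ht; apply: (leaves_osubst Ht) => q u; exact: sem_leaves. Qed.

End PluggedContexts.

Section InputTrees.
Variables (S D : ranked_alphabet) (Q P : finType) (M : dtla S D Q P).

Lemma dtpla_two_states : dtpla M -> exists p1 p2 : P, p1 != p2.
Proof. by move=> /card_gt1P [p1 [p2 [_ _ np]]]; exists p1, p2. Qed.

(* Earliness is vacuous without input trees, so an earliest dtla with a
   state and a nonempty output alphabet has some input tree. *)
Lemma earliest_has_input : earliest M -> Q -> D -> exists s : itree S, wf s.
Proof.
move=> early q d; case: (classic (exists s : itree S, wf s)) => // nos.
by case: early; exists q, d => s t ws; case: nos; exists s.
Qed.

(* If the output alphabet is empty, the axioms of M are single states;
   by la-uniformity two look-ahead states give two different axiom states,
   and distinguishing their translations requires an input tree. *)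
Lemma canonical_dtpla_has_input :
  canonical M -> dtpla M -> (D -> False) -> exists s : itree S, wf s.
Proof.
case=> _ [rho [_ Hax _ _]] _ _ Hdist /dtpla_two_states [p1 [p2 np]] noD.
have axiom_state p : exists q, axiom M p = Leaf q /\ rho q = p.
  case E: (axiom M p) => [d l|q]; first by case: (noD d).
  by exists q; split=> //; apply: Hax; rewrite E.
have [q1 [_ r1]] := axiom_state p1; have [q2 [_ r2]] := axiom_state p2.
have nq : q1 <> q2 by move=> e; move: np; rewrite -r1 -r2 e eqxx.
by have [s [ws _]] := Hdist _ _ nq; exists s.
Qed.

End InputTrees.

(* The run of the dtop N on a context C is defined: either some input tree
   s exists and totality of N on C[s] applies, or N has no states at all. *)
Lemma dtop_context_run (S D : ranked_alphabet) (QM PM QN : finType)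
  (M : dtla S D QM PM) (N : dtla S D QN unit) (C : tree S unit) :
  canonical M -> dtpla M -> earliest N -> total_dtla N -> wf C ->
  exists tN, M_ctx N C tt = Some tN.
Proof.
move=> canM tplaM earlyN totN wC.
case: (classic (exists s : itree S, wf s)) => [[s ws]|nos].
  have := total_context_run totN wC ws; case: (delta_M N s).
  by case: (M_ctx N C tt) => // tN _; exists tN.
apply: osubst_empty => q; case: (pickP (@predT D)) => [d _|noD].
  by apply: nos; exact: earliest_has_input earlyN q d.
by apply: nos; apply: (canonical_dtpla_has_input canM tplaM) => d; have := noD d.
Qed.

Section AheadnessAtLeaves.
Variables (S D : ranked_alphabet) (QM PM QN : finType).
Variables (M : dtla S D QM PM) (N : dtla S D QN unit).
Variable phi : QN -> PM -> tree D (QM * PM).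
Hypotheses (tplaM : dtpla M) (earlyN : earliest N) (totN : total_dtla N).
Hypothesis eqMN : same_translation M N.
Variables (C : tree S unit) (tN : tree D (QN * unit)).
Hypothesis wC : wf C.
Hypothesis HN : M_ctx N C tt = Some tN.
Hypothesis hM : forall p, M_ctx M C p = Some (subst (fun qb => phi qb.1 p) tN).

(* If all φ(q,p) started with the same symbol d, then so would q_N(s) for
   every input s (compare M(C[s]) and N(C[s]) at the position of <q,⊥>),
   and N would not be earliest. *)
Lemma phi_root_not_uniform v q d :
  subtree tN v = Some (Leaf (q, tt)) -> ~ (forall p, exists ks, phi q p = Sym d ks).
Proof.
move=> Hv Hroot; apply: earlyN; exists q, d => s t ws Hqs.
have wCs : wf (subst (fun _ => s) C) by apply: wf_subst.
have [tNs HNs] : exists t', M_of N (subst (fun _ => s) C) = Some t'.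
  by case E: (M_of N _) => [t'|]; [exists t' | case: (totN wCs)].
have := eqMN wCs; rewrite HNs; case HMs : (M_of M _) => [tMs|] //= [Eer].
have HNs_v : subtree tNs v = Some t.
  have HN' : M_ctx N C (delta_M N s) = Some tN by case: (delta_M N s).
  have [u [/= Hu ->]] := M_of_plug_subtree HN' Hv HNs.
  by rewrite Hu in Hqs; case: Hqs => ->.
have [us HMs_v] : exists us, subtree tMs v = Some (Sym d us).
  have [ks Eks] := Hroot (delta_M M s).
  have [u [/= Hu ->]] := M_of_plug_subtree (hM _) (subtree_subst _ Hv) HMs.
  by move: Hu; rewrite Eks /=; case: (oseq _) => [us|] //= [<-]; exists us.
(* M(C[s]) and N(C[s]) agree up to leaf labels, so t also starts with d. *)
have := subtree_subst (fun _ => Leaf tt) HNs_v.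
have := subtree_subst (fun _ => Leaf tt) HMs_v.
rewrite /erase /tmap in Eer; rewrite Eer => -> [].
by case: t {Hqs HNs_v} => [d' ts|w] //= [-> _]; exists ts.
Qed.

(* If all φ(q,p) were the same leaf z, then z would carry every look-ahead
   state p, since it is a leaf of M(C[p]); but M has two of them. *)
Lemma phi_leaf_not_uniform v q z :
  subtree tN v = Some (Leaf (q, tt)) -> ~ (forall p, phi q p = Leaf z).
Proof.
move=> Hv Hleaf; have [p1 [p2 np]] := dtpla_two_states tplaM.
have z_la p : z.2 = p.
  apply: (run_leaves (hM p)); apply: (occurs_subtree (subtree_subst _ Hv)).
  by rewrite /= Hleaf.
by move: np; rewrite -(z_la p1) -(z_la p2) eqxx.
Qed.

Lemma phi_common_prefix_bot v q :
  subtree tN v = Some (Leaf (q, tt)) ->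
  forall g, (forall p, ple g (tmap Some (phi q p))) -> g = Leaf None.
Proof.
move=> Hv [d gs|[z|]] Hg //; exfalso.
- apply: (phi_root_not_uniform Hv) => p; move: (Hg p).
  by case: (phi q p) => [d' ks|w] H; inversion H; exists ks.
- apply: (phi_leaf_not_uniform Hv) => p; move: (Hg p).
  by case: (phi q p) => [d' ks|w] H; inversion H.
Qed.

End AheadnessAtLeaves.

Theorem mainTheorem4
  (S D : ranked_alphabet) (QM PM QN : finType)
  (M : dtla S D QM PM) (N : dtla S D QN unit)
  (wfM : wf_dtla M) (wfN : wf_dtla N)
  (canM : canonical M) (tplaM : dtpla M)
  (earlyN : earliest N) (totN : total_dtla N) (reachN : forall q, reachable N q)
  (eqMN : same_translation M N)
  (phi : QN -> PM -> tree D (QM * PM)) (hphi : aheadness M N phi)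
  (C : tree S unit) (hC : is_context C) :
  exists tN : tree D (QN * unit),
    M_ctx N C tt = Some tN /\
    (* (1)  N(C)Φ = pref(M,C) *)
    is_pref M C (Phi (QM * PM) tN) /\
    (* (2)  N(C)/v = <q,⊥>  implies  φ(q,p) = M(C[p])/v *)
    (forall (v : seq nat) (q : QN) (p : PM),
        subtree tN v = Some (Leaf (q, tt)) ->
        exists tM, M_ctx M C p = Some tM /\ subtree tM v = Some (phi q p)).
Proof.
have wC : wf C by case: hC.
have [tN HN] := dtop_context_run canM tplaM earlyN totN wC.
have hM p : M_ctx M C p = Some (subst (fun qb => phi qb.1 p) tN).
  by rewrite hphi // HN.
exists tN; split=> //; split; last first.
  move=> v q p Hv; exists (subst (fun qb => phi qb.1 p) tN); split=> //.
  exact: subtree_subst Hv.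
split=> [_ [p [tM [HtM ->]]] | g Hg].
  by move: HtM; rewrite hM => -[<-]; exact: ple_Phi.
have [p0 _] := dtpla_two_states tplaM.
apply: (Phi_greatest p0 (f := fun p qb => phi qb.1 p)) => [v [q []] Hv|p].
  exact: (phi_common_prefix_bot (phi := phi) tplaM earlyN totN eqMN wC HN hM Hv).
by apply: Hg; exists p, (subst (fun qb => phi qb.1 p) tN).
Qed.
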